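(* Let $K, G_1, G_2$ be open graphs and let $e_1 : K \to G_1$, $e_2 : K \to G_2$ be open embeddings that are boundary-coherent. Let $M$ with maps $i_1 : G_1 \to M$, $i_2 : G_2 \to M$ be the pushout of $e_1$ and $e_2$ in $\mathbf{OGraph}$ (the merging of $G_1$ and $G_2$ on $K$). Then $i_1$ and $i_2$ are open embeddings.
   Context: A pre-open graph $G$ consists of a set $E_G$ of edges, two disjoint sets $V_G$ (vertices) and $\epsilon_G$ (edge points), and maps $s_G, t_G : E_G \to V_G \sqcup \epsilon_G$. A morphism consists of a map on edges and a map on points sending vertices to vertices and edge points to edge points, commuting with sources and targets. An open graph is a pre-open graph in which the restrictions of $s_G$ to $s_G^{-1}(\epsilon_G)$ and of $t_G$ to $t_G^{-1}(\epsilon_G)$ are injective; $\mathbf{OGraph}$ is the full subcategory of open graphs. An open embedding is a monomorphism $e: G\to H$ (injective on edges and points) which is full on vertices: whenever $e(p)$ is a vertex, every edge of $H$ with source or target $e(p)$ lies in the image of $e$. For an edge point $p$: it is an input if it has exactly one out-edge and no in-edges, an output if it has exactly one in-edge and no out-edges, isolated if it has neither; $\mathrm{Bound}(G)$ is the set of inputs and outputs and $\mathrm{Isol}(G)$ the set of isolated points. Arrows $f: G \to H_1$, $g : G \to H_2$ are boundary-coherent if (1) for all $p\in\mathrm{Bound}(G)$, $f(p)\notin \mathrm{Bound}(H_1)$ implies $g(p)\in\mathrm{Bound}(H_2)$, and (2) for all $p\in \mathrm{Isol}(G)$, either $f(p)$ is isolated, or $g(p)$ is isolated, or one of $f(p),g(p)$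 is an input and the other an output. (Such pushouts exist in $\mathbf{OGraph}$.) *)

Set Implicit Arguments.

(* A pre-open graph: edges E, vertices V, edge points P (disjoint: points are V + P),
   source and target maps E -> V + P. *)
Record pograph := POGraph {
  E : Type;
  V : Type;
  P : Type;
  src : E -> V + P;
  tgt : E -> V + P
}.

Definition map_pt {V1 P1 V2 P2 : Type} (fv : V1 -> V2) (fp : P1 -> P2)
  (x : V1 + P1) : V2 + P2 :=
  match x with inl v => inl (fv v) | inr p => inr (fp p) end.

Record pomorph (G H : pograph) := POMorph {
  fE : E G -> E H;
  fV : V G -> V H;
  fP : P G -> P H;
  fsrc : forall e, src H (fE e) = map_pt fV fP (src G e);
  ftgt : forall e, tgt H (fE e) = map_pt fV fP (tgt G e)
}.

Definition fpt {G H : pograph} (f : pomorph G H) : V G + P G -> V H + P H :=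
  map_pt (fV f) (fP f).

Definition comp {G H K : pograph} (g : pomorph H K) (f : pomorph G H) : pomorph G K.
Proof.
  refine (@POMorph G K (fun e => fE g (fE f e)) (fun v => fV g (fV f v))
                 (fun p => fP g (fP f p)) _ _).
  - intro e. rewrite (fsrc g), (fsrc f). destruct (src G e); reflexivity.
  - intro e. rewrite (ftgt g), (ftgt f). destruct (tgt G e); reflexivity.
Defined.

Definition meq {G H : pograph} (f g : pomorph G H) : Prop :=
  (forall e, fE f e = fE g e) /\ (forall v, fV f v = fV g v) /\
  (forall p, fP f p = fP g p).

Definition is_open (G : pograph) : Prop :=
  (forall e1 e2 p, src G e1 = inr p -> src G e2 = inr p -> e1 = e2) /\
  (forall e1 e2 p, tgt G e1 = inr p -> tgt G e2 = inr p -> e1 = e2).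

Definition open_embedding {G H : pograph} (f : pomorph G H) : Prop :=
  (forall e1 e2, fE f e1 = fE f e2 -> e1 = e2) /\
  (forall v1 v2, fV f v1 = fV f v2 -> v1 = v2) /\
  (forall p1 p2, fP f p1 = fP f p2 -> p1 = p2) /\
  (forall (v : V G) (e : E H),
      (src H e = inl (fV f v) \/ tgt H e = inl (fV f v)) ->
      exists e', fE f e' = e).

Definition has_out (G : pograph) (p : P G) : Prop := exists e, src G e = inr p.
Definition has_in (G : pograph) (p : P G) : Prop := exists e, tgt G e = inr p.
Definition exactly_one_out (G : pograph) (p : P G) : Prop :=
  exists e, src G e = inr p /\ forall e', src G e' = inr p -> e' = e.
Definition exactly_one_in (G : pograph) (p : P G) : Prop :=
  exists e, tgt G e = inr p /\ forall e', tgt G e' = inr p -> e' = e.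

Definition is_input (G : pograph) (p : P G) : Prop :=
  exactly_one_out G p /\ ~ has_in G p.
Definition is_output (G : pograph) (p : P G) : Prop :=
  exactly_one_in G p /\ ~ has_out G p.
Definition is_isolated (G : pograph) (p : P G) : Prop :=
  ~ has_out G p /\ ~ has_in G p.
Definition is_boundary (G : pograph) (p : P G) : Prop :=
  is_input G p \/ is_output G p.

Definition boundary_coherent {G H1 H2 : pograph}
  (f : pomorph G H1) (g : pomorph G H2) : Prop :=
  (forall p : P G, is_boundary G p ->
     ~ is_boundary H1 (fP f p) -> is_boundary H2 (fP g p)) /\
  (forall p : P G, is_isolated G p ->
     is_isolated H1 (fP f p) \/ is_isolated H2 (fP g p) \/
     (is_input H1 (fP f p) /\ is_output H2 (fP g p)) \/
     (is_output H1 (fP f p) /\ is_input H2 (fP g p))).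

(* (M, i1, i2) is a pushout of e1, e2 in the full subcategory OGraph of open graphs. *)
Definition is_pushout_OGraph {K G1 G2 M : pograph}
  (e1 : pomorph K G1) (e2 : pomorph K G2)
  (i1 : pomorph G1 M) (i2 : pomorph G2 M) : Prop :=
  is_open M /\
  meq (comp i1 e1) (comp i2 e2) /\
  forall (Q : pograph) (q1 : pomorph G1 Q) (q2 : pomorph G2 Q),
    is_open Q -> meq (comp q1 e1) (comp q2 e2) ->
    exists u : pomorph M Q,
      meq (comp u i1) q1 /\ meq (comp u i2) q2 /\
      forall u' : pomorph M Q, meq (comp u' i1) q1 -> meq (comp u' i2) q2 -> meq u' u.

From Stdlib Require Import Classical ClassicalEpsilon ProofIrrelevance.

(* The pushout is compared with an explicit merged graph: G1 together with the
   part of G2 lying outside e2(K), the glued pieces of G2 being sent onto G1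
   through e1.  The merged graph is open exactly thanks to boundary coherence:
   an edge of G2 outside e2(K) and an edge of G1 can never share an endpoint
   coming from K.  The mediating morphism from the pushout to the merged graph
   shows that both legs are injective and that vertices of G1 and G2 are
   identified only when they come from K; and since the legs are jointly
   surjective on edges, fullness of e1 and e2 transfers to the legs. *)

Section Glue.
Context {A B C : Type} (f : A -> B) (g : A -> C).

Definition outside_image : Type := {b : B | ~ exists a, f a = b}.

Definition glue (b : B) : C + outside_image :=
  match excluded_middle_informative (exists a, f a = b) with
  | left H => inl (g (proj1_sig (constructive_indefinite_description _ H)))
  | right H => inr (exist _ b H)
  end.

Lemma glue_inl_inv b c : glue b = inl c -> exists a, f a = b /\ g a = c.
Proof.
  unfold glue. destruct excluded_middle_informative as [H|H]; [|discriminate].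
  destruct constructive_indefinite_description as [a Ha]; simpl.
  intro Hc. injection Hc. eauto.
Qed.

Lemma glue_inr_inv b b' : glue b = inr b' -> proj1_sig b' = b.
Proof.
  unfold glue. destruct excluded_middle_informative as [H|H]; [discriminate|].
  intro Hb. injection Hb as <-. reflexivity.
Qed.

Lemma glue_inj :
  (forall x y, g x = g y -> x = y) -> forall b b', glue b = glue b' -> b = b'.
Proof.
  intros g_inj b b' Heq.
  destruct (glue b) as [c|d] eqn:Hb, (glue b') as [c'|d'] eqn:Hb'; try discriminate.
  - injection Heq as <-.
    apply glue_inl_inv in Hb as [a [<- <-]], Hb' as [a' [<- Ha]].
    rewrite (g_inj _ _ Ha). reflexivity.
  - injection Heq as <-.
    rewrite <- (glue_inr_inv _ _ Hb). apply (glue_inr_inv _ _ Hb').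
Qed.

Hypothesis f_inj : forall x y, f x = f y -> x = y.

Lemma glue_image a : glue (f a) = inl (g a).
Proof.
  unfold glue. destruct excluded_middle_informative as [H|H].
  - destruct constructive_indefinite_description as [x Hx]; simpl.
    rewrite (f_inj _ _ Hx). reflexivity.
  - exfalso. apply H. eauto.
Qed.
End Glue.

Lemma map_pt_inl_inv {V1 P1 V2 P2 : Type} (fv : V1 -> V2) (fp : P1 -> P2) x w :
  map_pt fv fp x = inl w -> exists v, x = inl v /\ fv v = w.
Proof. destruct x; simpl; intro H; injection H || discriminate H; eauto. Qed.

Lemma map_pt_inr_inv {V1 P1 V2 P2 : Type} (fv : V1 -> V2) (fp : P1 -> P2) x q :
  map_pt fv fp x = inr q -> exists p, x = inr p /\ fp p = q.
Proof. destruct x; simpl; intro H; injection H || discriminate H; eauto. Qed.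

Lemma map_pt_id {V1 P1 : Type} (x : V1 + P1) : map_pt (fun v => v) (fun p => p) x = x.
Proof. destruct x; reflexivity. Qed.

Definition pomono {G H : pograph} (f : pomorph G H) : Prop :=
  (forall e1 e2, fE f e1 = fE f e2 -> e1 = e2) /\
  (forall v1 v2, fV f v1 = fV f v2 -> v1 = v2) /\
  (forall p1 p2, fP f p1 = fP f p2 -> p1 = p2).

Definition full_on_vertices {G H : pograph} (f : pomorph G H) : Prop :=
  forall (v : V G) (e : E H),
    (src H e = inl (fV f v) \/ tgt H e = inl (fV f v)) -> exists e', fE f e' = e.

Lemma open_embedding_iff {G H : pograph} (f : pomorph G H) :
  open_embedding f <-> pomono f /\ full_on_vertices f.
Proof. unfold open_embedding, pomono, full_on_vertices. tauto. Qed.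

Lemma pomono_of_comp {G H Q : pograph} {f : pomorph G H} {u : pomorph H Q}
  {g : pomorph G Q} :
  meq (comp u f) g -> pomono g -> pomono f.
Proof.
  intros [hE [hV hP]] [gE [gV gP]]; simpl in hE, hV, hP.
  repeat split; intros x y Hxy.
  - apply gE. rewrite <- !hE, Hxy. reflexivity.
  - apply gV. rewrite <- !hV, Hxy. reflexivity.
  - apply gP. rewrite <- !hP, Hxy. reflexivity.
Qed.

Lemma morph_incident_vertex {G H : pograph} (f : pomorph G H) e {x} :
  (src H (fE f e) = inl x \/ tgt H (fE f e) = inl x) ->
  exists w, (src G e = inl w \/ tgt G e = inl w) /\ fV f w = x.
Proof.
  rewrite (fsrc f), (ftgt f).
  intros [Hx|Hx]; apply map_pt_inl_inv in Hx as [w [Hw <-]]; eauto.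
Qed.

Lemma morph_has_in {G H : pograph} (f : pomorph G H) {p} :
  has_in G p -> has_in H (fP f p).
Proof. intros [e He]. exists (fE f e). rewrite (ftgt f), He. reflexivity. Qed.

Lemma in_out_not_boundary {G : pograph} {p} :
  has_in G p -> has_out G p -> ~ is_boundary G p.
Proof. intros Hin Hout [[_ Hno]|[_ Hno]]; contradiction. Qed.

Lemma open_output {G : pograph} {p} :
  is_open G -> has_in G p -> ~ has_out G p -> is_output G p.
Proof.
  intros [_ tgt_inj] [e He] Hno. split; [|exact Hno].
  exists e. split; [exact He|]. intros e' He'. apply (tgt_inj _ _ p); assumption.
Qed.

Section SharedSource.
Context {K G1 G2 : pograph} {e1 : pomorph K G1} {e2 : pomorph K G2}.
Hypotheses (oK : is_open K) (oG2 : is_open G2) (bc : boundary_coherent e1 e2).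

Lemma shared_source_in_image k b :
  has_out G1 (fP e1 k) -> src G2 b = inr (fP e2 k) -> exists c, fE e2 c = b.
Proof.
  intros out1 Hb.
  assert (out2 : has_out G2 (fP e2 k)) by (exists b; exact Hb).
  destruct (classic (has_out K k)) as [[c Hc]|no_out].
  - exists c. apply (proj1 oG2 _ _ (fP e2 k)); [|exact Hb].
    rewrite (fsrc e2), Hc. reflexivity.
  - exfalso. destruct (classic (has_in K k)) as [in_k|no_in].
    + apply (in_out_not_boundary (morph_has_in e2 in_k) out2).
      apply (proj1 bc k (or_intror (open_output oK in_k no_out))).
      exact (in_out_not_boundary (morph_has_in e1 in_k) out1).
    + destruct (proj2 bc k (conj no_out no_in))
        as [[no1 _]|[[no2 _]|[[_ [_ no2]]|[[_ no1] _]]]]; contradiction.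
Qed.
End SharedSource.

Section Merge.
Context {K G1 G2 : pograph} (e1 : pomorph K G1) (e2 : pomorph K G2).

Definition merge_vertex := glue (fV e2) (fV e1).
Definition merge_point := glue (fP e2) (fP e1).
Definition merge_edge := glue (fE e2) (fE e1).

Definition merge : pograph :=
  @POGraph (E G1 + outside_image (fE e2)) (V G1 + outside_image (fV e2))
    (P G1 + outside_image (fP e2))
    (fun x => match x with
              | inl a => map_pt inl inl (src G1 a)
              | inr b => map_pt merge_vertex merge_point (src G2 (proj1_sig b))
              end)
    (fun x => match x with
              | inl a => map_pt inl inl (tgt G1 a)
              | inr b => map_pt merge_vertex merge_point (tgt G2 (proj1_sig b))
              end).

Definition merge_in1 : pomorph G1 merge :=
  @POMorph G1 merge inl inl inl (fun _ => eq_refl) (fun _ => eq_refl).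

Lemma merge_in1_pomono : pomono merge_in1.
Proof. repeat split; intros x y H; injection H; trivial. Qed.

Hypothesis mono_e2 : pomono e2.

Lemma merge_pt_image x :
  map_pt merge_vertex merge_point (fpt e2 x) = map_pt inl inl (fpt e1 x).
Proof.
  destruct mono_e2 as [_ [inj_V inj_P]].
  destruct x; simpl; unfold merge_vertex, merge_point; rewrite glue_image; trivial.
Qed.

Definition merge_in2 : pomorph G2 merge.
Proof.
  refine (@POMorph G2 merge merge_edge merge_vertex merge_point _ _); intro e; simpl;
    destruct (merge_edge e) as [a|b] eqn:He;
    solve [ apply glue_inl_inv in He as [k [<- <-]];
            rewrite (fsrc e1), (fsrc e2) || rewrite (ftgt e1), (ftgt e2);
            symmetry; apply merge_pt_image
          | apply glue_inr_inv in He as ->; reflexivity ].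
Defined.

Lemma merge_commutes : meq (comp merge_in1 e1) (comp merge_in2 e2).
Proof.
  destruct mono_e2 as [inj_E [inj_V inj_P]].
  repeat split; intro x; simpl; symmetry;
    unfold merge_edge, merge_vertex, merge_point; apply glue_image; assumption.
Qed.

Hypothesis mono_e1 : pomono e1.

Lemma merge_in2_pomono : pomono merge_in2.
Proof.
  destruct mono_e1 as [inj_E [inj_V inj_P]].
  repeat split; apply glue_inj; assumption.
Qed.

Hypotheses (oK : is_open K) (oG1 : is_open G1) (oG2 : is_open G2)
  (bc : boundary_coherent e1 e2).

Lemma merge_src_mixed a b p :
  src merge (inl a) = inr p -> src merge (inr b) = inr p -> False.
Proof.
  destruct b as [b outside_b]; simpl.
  intros Ha Hb.
  apply map_pt_inr_inv in Ha as [pa [Ha <-]], Hb as [pb [Hb Hp]].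
  apply glue_inl_inv in Hp as [k [<- <-]].
  destruct (shared_source_in_image oK oG2 bc k b) as [c Hc];
    [exists a; exact Ha | exact Hb |].
  apply outside_b. eauto.
Qed.

Lemma merge_src_injective x y p :
  src merge x = inr p -> src merge y = inr p -> x = y.
Proof.
  destruct x as [a|a], y as [b|b]; intros Hx Hy.
  - simpl in Hx, Hy.
    apply map_pt_inr_inv in Hx as [pa [Ha <-]], Hy as [pb [Hb Hp]].
    injection Hp as ->. f_equal. apply (proj1 oG1 _ _ pa Ha Hb).
  - destruct (merge_src_mixed _ _ _ Hx Hy).
  - destruct (merge_src_mixed _ _ _ Hy Hx).
  - destruct a as [a outside_a], b as [b outside_b]; simpl in Hx, Hy.
    apply map_pt_inr_inv in Hx as [pa [Ha <-]], Hy as [pb [Hb Hp]].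
    apply (glue_inj _ _ (proj2 (proj2 mono_e1))) in Hp as ->.
    f_equal. apply subset_eq_compat, (proj1 oG2 _ _ pa Ha Hb).
Qed.
End Merge.

Definition rev (G : pograph) : pograph := @POGraph (E G) (V G) (P G) (tgt G) (src G).

Definition rev_morph {G H : pograph} (f : pomorph G H) : pomorph (rev G) (rev H) :=
  @POMorph (rev G) (rev H) (fE f) (fV f) (fP f) (ftgt f) (fsrc f).

Lemma is_open_rev {G : pograph} : is_open G -> is_open (rev G).
Proof. intros [Hs Ht]. split; assumption. Qed.

Lemma boundary_coherent_rev {K G1 G2 : pograph} {e1 : pomorph K G1} {e2 : pomorph K G2} :
  boundary_coherent e1 e2 -> boundary_coherent (rev_morph e1) (rev_morph e2).
Proof.
  unfold boundary_coherent, is_boundary, is_isolated.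
  intros [bc_bound bc_isol]. split; intros p Hp.
  - specialize (bc_bound p). simpl in *. tauto.
  - destruct (bc_isol p) as [H|[H|[H|H]]]; simpl in *; tauto.
Qed.

(* The target half of openness is the source half for the reversed graphs, whose
   merge is convertibly the reversal of the merge. *)
Lemma merge_open {K G1 G2 : pograph} {e1 : pomorph K G1} {e2 : pomorph K G2} :
  is_open K -> is_open G1 -> is_open G2 -> pomono e1 ->
  boundary_coherent e1 e2 -> is_open (merge e1 e2).
Proof.
  intros oK oG1 oG2 mono1 bc. split.
  - exact (merge_src_injective e1 e2 mono1 oK oG1 oG2 bc).
  - exact (merge_src_injective (rev_morph e1) (rev_morph e2) mono1
             (is_open_rev oK) (is_open_rev oG1) (is_open_rev oG2)
             (boundary_coherent_rev bc)).
Qed.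

Section LegsImage.
Context {K G1 G2 M : pograph} (e1 : pomorph K G1) (e2 : pomorph K G2)
  (i1 : pomorph G1 M) (i2 : pomorph G2 M).

Definition in_legs_image (e : E M) : Prop :=
  (exists a, fE i1 a = e) \/ (exists b, fE i2 b = e).

Definition legs_image : pograph :=
  @POGraph {e : E M | in_legs_image e} (V M) (P M)
    (fun e => src M (proj1_sig e)) (fun e => tgt M (proj1_sig e)).

Definition legs_image_incl : pomorph legs_image M.
Proof.
  refine (@POMorph legs_image M (@proj1_sig _ _) (fun v => v) (fun p => p) _ _);
    intro e; symmetry; apply map_pt_id.
Defined.

Definition legs_image_in1 : pomorph G1 legs_image :=
  @POMorph G1 legs_image (fun a => exist _ (fE i1 a) (or_introl (ex_intro _ a eq_refl)))
    (fV i1) (fP i1) (fsrc i1) (ftgt i1).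

Definition legs_image_in2 : pomorph G2 legs_image :=
  @POMorph G2 legs_image (fun b => exist _ (fE i2 b) (or_intror (ex_intro _ b eq_refl)))
    (fV i2) (fP i2) (fsrc i2) (ftgt i2).

Definition id_morph (G : pograph) : pomorph G G.
Proof.
  refine (@POMorph G G (fun e => e) (fun v => v) (fun p => p) _ _);
    intro e; symmetry; apply map_pt_id.
Defined.

Lemma pushout_mediator_unique (Q : pograph) (q1 : pomorph G1 Q) (q2 : pomorph G2 Q)
  (u u' : pomorph M Q) :
  is_pushout_OGraph e1 e2 i1 i2 -> is_open Q -> meq (comp q1 e1) (comp q2 e2) ->
  meq (comp u i1) q1 -> meq (comp u i2) q2 ->
  meq (comp u' i1) q1 -> meq (comp u' i2) q2 ->
  forall e, fE u e = fE u' e.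
Proof.
  intros [_ [_ UP]] oQ comm u1 u2 u1' u2' e.
  destruct (UP Q q1 q2 oQ comm) as [w [_ [_ w_unique]]].
  rewrite (proj1 (w_unique u u1 u2)), (proj1 (w_unique u' u1' u2')). reflexivity.
Qed.

(* The identity of M and the mediator into the image of the legs followed by
   the inclusion both factor i1 and i2 through M, so they agree. *)
Lemma pushout_jointly_surjective :
  is_pushout_OGraph e1 e2 i1 i2 -> forall e, in_legs_image e.
Proof.
  intro PO. pose proof PO as [oM [comm UP]].
  assert (o_image : is_open legs_image).
  { split; intros [x in_x] [y in_y] p Hx Hy; apply subset_eq_compat;
      [apply (proj1 oM _ _ p) | apply (proj2 oM _ _ p)]; assumption. }
  assert (comm_image : meq (comp legs_image_in1 e1) (comp legs_image_in2 e2)).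
  { destruct comm as [cE [cV cP]]. repeat split; simpl; auto.
    intro k. apply subset_eq_compat, cE. }
  destruct (UP _ _ _ o_image comm_image) as [u [[u1E [u1V u1P]] [[u2E [u2V u2P]] _]]].
  simpl in u1E, u1V, u1P, u2E, u2V, u2P.
  intro e. change (in_legs_image (fE (id_morph M) e)).
  rewrite (pushout_mediator_unique M i1 i2 (id_morph M) (comp legs_image_incl u) PO oM comm).
  - exact (proj2_sig (fE u e)).
  - repeat split; reflexivity.
  - repeat split; reflexivity.
  - repeat split; intro x; simpl; rewrite ?u1E, ?u1V, ?u1P; reflexivity.
  - repeat split; intro x; simpl; rewrite ?u2E, ?u2V, ?u2P; reflexivity.
Qed.
End LegsImage.

Lemma pushout_glued_vertices {K G1 G2 M : pograph}
  {e1 : pomorph K G1} {e2 : pomorph K G2} {i1 : pomorph G1 M} {i2 : pomorph G2 M} :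
  is_open K -> is_open G1 -> is_open G2 -> pomono e1 -> pomono e2 ->
  boundary_coherent e1 e2 -> is_pushout_OGraph e1 e2 i1 i2 ->
  (forall v w, fV i1 v = fV i2 w -> exists k, fV e1 k = v /\ fV e2 k = w).
Proof.
  intros oK oG1 oG2 mono1 mono2 bc [_ [_ UP]] v w Hvw.
  destruct (UP _ _ _ (merge_open oK oG1 oG2 mono1 bc) (merge_commutes e1 e2 mono2))
    as [u [[_ [u1V _]] [[_ [u2V _]] _]]].
  simpl in u1V, u2V.
  apply (f_equal (fV u)) in Hvw. rewrite u1V, u2V in Hvw.
  symmetry in Hvw. apply glue_inl_inv in Hvw as [k [<- <-]]. eauto.
Qed.

Lemma pushout_legs_pomono {K G1 G2 M : pograph}
  {e1 : pomorph K G1} {e2 : pomorph K G2} {i1 : pomorph G1 M} {i2 : pomorph G2 M} :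
  is_open K -> is_open G1 -> is_open G2 -> pomono e1 -> pomono e2 ->
  boundary_coherent e1 e2 -> is_pushout_OGraph e1 e2 i1 i2 ->
  pomono i1 /\ pomono i2.
Proof.
  intros oK oG1 oG2 mono1 mono2 bc [_ [_ UP]].
  destruct (UP _ _ _ (merge_open oK oG1 oG2 mono1 bc) (merge_commutes e1 e2 mono2))
    as [u [fact1 [fact2 _]]].
  split.
  - exact (pomono_of_comp fact1 (merge_in1_pomono e1 e2)).
  - exact (pomono_of_comp fact2 (merge_in2_pomono e1 e2 mono2 mono1)).
Qed.

Lemma full_of_glued_vertices {K G H M : pograph}
  (f : pomorph K G) (g : pomorph K H) (i : pomorph G M) (j : pomorph H M) :
  (forall c, fE i (fE f c) = fE j (fE g c)) ->
  (forall e, (exists a, fE i a = e) \/ (exists b, fE j b = e)) ->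
  (forall v w, fV i v = fV j w -> exists k, fV f k = v /\ fV g k = w) ->
  full_on_vertices g -> full_on_vertices i.
Proof.
  intros comm surj glued full_g v e He.
  destruct (surj e) as [found|[b <-]]; [exact found|].
  destruct (morph_incident_vertex j b He) as [w [Hw Hwv]].
  destruct (glued v w (eq_sym Hwv)) as [k [<- <-]].
  destruct (full_g k b Hw) as [c <-].
  exists (fE f c). apply comm.
Qed.

Theorem corollary1 (K G1 G2 M : pograph)
  (e1 : pomorph K G1) (e2 : pomorph K G2)
  (i1 : pomorph G1 M) (i2 : pomorph G2 M) :
  is_open K -> is_open G1 -> is_open G2 ->
  open_embedding e1 -> open_embedding e2 ->
  boundary_coherent e1 e2 ->
  is_pushout_OGraph e1 e2 i1 i2 ->
  open_embedding i1 /\ open_embedding i2.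
Proof.
  intros oK oG1 oG2 oe1 oe2 bc PO.
  apply open_embedding_iff in oe1 as [mono1 full1], oe2 as [mono2 full2].
  destruct (pushout_legs_pomono oK oG1 oG2 mono1 mono2 bc PO) as [mono_i1 mono_i2].
  pose proof (pushout_glued_vertices oK oG1 oG2 mono1 mono2 bc PO) as glued.
  pose proof (pushout_jointly_surjective e1 e2 i1 i2 PO) as surj.
  destruct PO as [_ [[commE _] _]]; simpl in commE.
  split; apply open_embedding_iff; split; trivial.
  - exact (full_of_glued_vertices e1 e2 i1 i2 commE surj glued full2).
  - refine (full_of_glued_vertices e2 e1 i2 i1 _ _ _ full1).
    + intro c. symmetry. apply commE.
    + intro e. apply or_comm, surj.
    + intros w v Hwv. destruct (glued v w (eq_sym Hwv)) as [k [Hv Hw]]. eauto.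
Qed.
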